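(* Let $k$ be a field containing a primitive fourth root of unity $i$, and let $H_{\pm}(8)$ be the quasi-Hopf algebra described in the context, with dual basis $\{P_{g^ax^b}\mid 0\le a\le1,\ 0\le b\le 3\}$ of $H_\pm(8)^*$ corresponding to the basis $\{g^ax^b\}$. Then the space of left cointegrals on $H_{\pm}(8)$ is $kP_{x^3}$.
   Context: $H_{\pm}(8)$ is the unital algebra generated by $g,x$ with relations $g^2=1$, $x^4=0$, $gx=-xg$ (basis $g^ax^b$, $0\le a\le1$, $0\le b\le3$), with $\Delta(g)=g\otimes g$, $\varepsilon(g)=1$, $\Delta(x)=x\otimes(p_+\pm ip_-)+1\otimes p_+x+g\otimes p_-x$, $\varepsilon(x)=0$, where $p_\pm=\frac12(1\pm g)$; reassociator $\Phi=1\otimes1\otimes1-2p_-\otimes p_-\otimes p_-$, antipode $S(g)=g$, $S(x)=-x(p_+\pm ip_-)$, and $\alpha=g$, $\beta=1$. (Two quasi-Hopf algebras, one for each sign.) Its modular element $\mu$ satisfies $\mu(g)=-1$, $\mu(x)=0$. General definitions, for a finite dimensional quasi-Hopf algebra $(H,\Delta,\varepsilon,\Phi,S,\alpha,\beta)$ (axioms of Drinfeld: $(\mathrm{Id}\otimes\Delta)\Delta(h)=\Phi(\Delta\otimes\mathrm{Id})\Delta(h)\Phi^{-1}$, counit axioms, 3-cocycle condition for $\Phi$, $(\mathrm{Id}\otimes\varepsilon\otimes\mathrm{Id})(\Phi)=1\otimes1$, $S(h_1)\alpha h_2=\varepsilon(h)\alpha$, $h_1\beta S(h_2)=\varepsilon(h)\beta$,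 $X^1\beta S(X^2)\alpha X^3=1=S(x^1)\alpha x^2\beta S(x^3)$), with $\Delta(h)=h_1\otimes h_2$, $\Phi=X^1\otimes X^2\otimes X^3$, $\Phi^{-1}=x^1\otimes x^2\otimes x^3$: $\gamma=S(x^1X^2)\alpha x^2X^3_1\otimes S(X^1)\alpha x^3X^3_2$; $\delta=X^1_1x^1\beta S(X^3)\otimes X^1_2x^2\beta S(X^2x^3)$; $f=f^1\otimes f^2=(S\otimes S)(\Delta^{\rm op}(x^1))\gamma\Delta(x^2\beta S(x^3))$ with inverse $f^{-1}=g^1\otimes g^2=\Delta(S(x^1)\alpha x^2)\delta(S\otimes S)(\Delta^{\rm cop}(x^3))$; $p_R=p^1\otimes p^2=x^1\otimes x^2\beta S(x^3)$; $q_R=q^1\otimes q^2=X^1\otimes S^{-1}(\alpha X^3)X^2$; $U=g^1S(q^2)\otimes g^2S(q^1)$, $V=S^{-1}(f^2p^2)\otimes S^{-1}(f^1p^1)$. Left integrals: $ht=\varepsilon(h)t$ for all $h$. $\mu\in H^*$ is the algebra map with $th=\mu(h)t$ for left integrals $t$. A left cointegral is $\lambda\in H^*$ with $\lambda(V^2h_2U^2)V^1h_1U^1=\mu(x^1)\lambda(hS(x^2))x^3$ for all $h$. *)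

From HB Require Import structures.
From mathcomp Require Import all_boot all_order all_algebra.
Set Implicit Arguments. Unset Strict Implicit. Unset Printing Implicit Defensive.
Import GRing.Theory.
Local Open Scope ring_scope.

(* Index set of the basis g^a x^b, 0 <= a <= 1, 0 <= b <= 3: the pair (a, b). *)
Definition B := ('I_2 * 'I_4)%type.

Section H8.
Variables (k : fieldType).

(* Elements of H, H(x)H, H(x)H(x)H as coefficient vectors on the basis
   g^a x^b, resp. on tensor products of basis vectors. *)
Definition H := {ffun B -> k}.

Definition scl (T : finType) (c : k) (u : {ffun T -> k}) : {ffun T -> k} :=
  [ffun t => c * u t].
Local Notation "c *F u" := (scl c u) (at level 40).
Definition H2 := {ffun B * B -> k}.
Definition H3 := {ffun B * B * B -> k}.

(* structure constants: g^a x^b * g^c x^d = (-1)^(b c) g^(a+c mod 2) x^(b+d)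
   (zero when b + d >= 4), from g^2 = 1, x^4 = 0, gx = -xg. *)
Definition cst (p q t : B) : k :=
  if ((val t.1 == (val p.1 + val q.1) %% 2)%N && (val t.2 == val p.2 + val q.2)%N)
  then (-1) ^+ (val p.2 * val q.1) else 0.

Definition mulH (u v : H) : H :=
  [ffun t => \sum_p \sum_q u p * v q * cst p q t].
Definition mulH2 (u v : H2) : H2 :=
  [ffun t => \sum_p \sum_q u p * v q * (cst p.1 q.1 t.1 * cst p.2 q.2 t.2)].
Definition mulH3 (u v : H3) : H3 :=
  [ffun t => \sum_p \sum_q u p * v q *
     (cst p.1.1 q.1.1 t.1.1 * cst p.1.2 q.1.2 t.1.2 * cst p.2 q.2 t.2)].

Definition eb (p : B) : H := [ffun t => (t == p)%:R].
Definition oneH : H := eb (ord0, ord0).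
Definition gH : H := eb (inord 1, ord0).
Definition xH : H := eb (ord0, inord 1).

Definition tens (u v : H) : H2 := [ffun t => u t.1 * v t.2].
Definition tens3 (u v w : H) : H3 := [ffun t => u t.1.1 * v t.1.2 * w t.2].
Definition one2 : H2 := tens oneH oneH.
Definition one3 : H3 := tens3 oneH oneH oneH.

Definition powH (u : H) (n : nat) : H := iter n (mulH u) oneH.
Definition pow2 (u : H2) (n : nat) : H2 := iter n (mulH2 u) one2.

Definition pplus : H := 2^-1 *F (oneH + gH).
Definition pminus : H := 2^-1 *F (oneH - gH).

Definition Phi : H3 := one3 - 2 *F tens3 pminus pminus pminus.
Definition alphaH : H := gH.
Definition betaH : H := oneH.

(* the modular element: algebra map with mu(g) = -1, mu(x) = 0 *)
Definition muH (u : H) : k :=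
  \sum_p u p * (if val p.2 == 0%N then (-1) ^+ val p.1 else 0).

Definition evalf (lam : {ffun B -> k}) (u : H) : k := \sum_p lam p * u p.

Definition Pdual (p : B) : {ffun B -> k} := [ffun t => (t == p)%:R].

(* j stands for the scalar +-i (the sign of the quasi-Hopf algebra H_{+-}(8)) *)
Variable j : k.

Definition DeltaG : H2 := tens gH gH.
Definition DeltaX : H2 :=
  tens xH (pplus + j *F pminus) + tens oneH (mulH pplus xH) + tens gH (mulH pminus xH).
(* Delta is the algebra map determined by Delta(g), Delta(x) *)
Definition DeltaB (p : B) : H2 := mulH2 (pow2 DeltaG p.1) (pow2 DeltaX p.2).
Definition Delta (u : H) : H2 := \sum_p u p *F DeltaB p.

(* S is the anti-algebra map determined by S(g) = g, S(x) = -x(p_+ +- i p_-) *)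
Definition SX : H := - mulH xH (pplus + j *F pminus).
Definition SB (p : B) : H := mulH (powH SX p.2) (powH gH p.1).
Definition S (u : H) : H := \sum_p u p *F SB p.

Variables (Sinv : H -> H) (Phiinv : H3).

(* (S (x) S)(Delta^op(T)) for T in H(x)H, extended linearly *)
Definition SSop (T : H2) : H2 := \sum_p T p *F tens (S (eb p.2)) (S (eb p.1)).

(* X = Phi (index p), x = Phi^{-1} (index q) *)
Definition gammaE : H2 :=
  \sum_p \sum_q (Phi p * Phiinv q) *F
    mulH2 (tens (mulH (mulH (S (mulH (eb q.1.1) (eb p.1.2))) alphaH) (eb q.1.2))
                (mulH (mulH (S (eb p.1.1)) alphaH) (eb q.2)))
          (Delta (eb p.2)).

Definition deltaE : H2 :=
  \sum_p \sum_q (Phi p * Phiinv q) *F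
    mulH2 (Delta (eb p.1.1))
          (tens (mulH (mulH (eb q.1.1) betaH) (S (eb p.2)))
                (mulH (mulH (eb q.1.2) betaH) (S (mulH (eb p.1.2) (eb q.2))))).

Definition fE : H2 :=
  \sum_q Phiinv q *F
    mulH2 (mulH2 (SSop (Delta (eb q.1.1))) gammaE)
          (Delta (mulH (mulH (eb q.1.2) betaH) (S (eb q.2)))).

Definition finvE : H2 :=
  \sum_q Phiinv q *F
    mulH2 (mulH2 (Delta (mulH (mulH (S (eb q.1.1)) alphaH) (eb q.1.2))) deltaE)
          (SSop (Delta (eb q.2))).

Definition pR : H2 :=
  \sum_q Phiinv q *F tens (eb q.1.1) (mulH (mulH (eb q.1.2) betaH) (S (eb q.2))).

Definition qR : H2 :=
  \sum_p Phi p *F tens (eb p.1.1) (mulH (Sinv (mulH alphaH (eb p.2))) (eb p.1.2)).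

(* U = g^1 S(q^2) (x) g^2 S(q^1),  V = S^{-1}(f^2 p^2) (x) S^{-1}(f^1 p^1) *)
Definition UE : H2 :=
  \sum_a \sum_c (finvE a * qR c) *F
    tens (mulH (eb a.1) (S (eb c.2))) (mulH (eb a.2) (S (eb c.1))).

Definition VE : H2 :=
  \sum_a \sum_c (fE a * pR c) *F
    tens (Sinv (mulH (eb a.2) (eb c.2))) (Sinv (mulH (eb a.1) (eb c.1))).

(* lambda(V^2 h_2 U^2) V^1 h_1 U^1 = mu(x^1) lambda(h S(x^2)) x^3 for all h *)
Definition is_left_cointegral (lam : {ffun B -> k}) : Prop :=
  forall h : H,
    \sum_a \sum_c \sum_d
       (VE a * UE c * Delta h d *
          evalf lam (mulH (mulH (eb a.2) (eb d.2)) (eb c.2))) *F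
       mulH (mulH (eb a.1) (eb d.1)) (eb c.1)
    = \sum_q (Phiinv q * muH (eb q.1.1) * evalf lam (mulH h (S (eb q.1.2)))) *F
        eb q.2.

End H8.

Notation "c *F u" := (scl c u) (at level 40).

Definition x3idx : B := (ord0, inord 3).

(* Every structure element of H_{+-}(8) (products, Delta, S, Phi) has
   coefficients in Z[i][1/2], where i is the chosen square root of -1.  The
   proof is by computational reflection:

   - elements of Z[i][1/2] are represented exactly by triples (a, b, e)
     standing for (a + b i) / 2^e, and elements of H, H(x)H, H(x)H(x)H by
     coefficient lists indexed through an encoding of the bases by naturals;
     all structure elements are computed on this model by vm_compute;
   - a map into any field k containing j with j^2 = -1 and 2 <> 0 transfers
     these computations to the definitions of the statement;
   - certified computations then show that S^{-1} is given by an explicit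
     table, Phi^{-1} = Phi, U = g (x) 1 and V = 1 (x) 1;
   - the cointegral condition is linear in h, so it suffices to test it on
     the eight basis elements; the resulting linear system in the values of
     lambda has solution space k P_{x^3}: suitable combinations of its
     equations isolate each lambda(g^a x^b) with (a, b) <> (0, 3) with a
     nonzero coefficient, while no equation involves lambda(x^3). *)

From Pilot Require Import Defs.
From HB Require Import structures.
From Stdlib Require Import ZArith.
From mathcomp Require Import all_boot all_order all_algebra.
From mathcomp Require Import ssrZ ring zify.
Import GRing.Theory.
Set Implicit Arguments. Unset Strict Implicit.
Local Open Scope ring_scope.

Section CoefficientVectors.
Variable k : fieldType.

Lemma sclA (T : finType) (a b : k) (u : {ffun T -> k}) : (a * b) *F u = a *F (b *F u).
Proof. by apply/ffunP => t; rewrite !ffunE mulrA. Qed.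

Lemma scl_addl (T : finType) (a b : k) (u : {ffun T -> k}) : (a + b) *F u = a *F u + b *F u.
Proof. by apply/ffunP => t; rewrite !ffunE mulrDl. Qed.

Lemma scl_N1 (T : finType) (u : {ffun T -> k}) : -1 *F u = - u.
Proof. by apply/ffunP => t; rewrite !ffunE mulN1r. Qed.

Lemma scl_sum (T : finType) (I : Type) (s : seq I) (a : k) (F : I -> {ffun T -> k}) :
  a *F (\sum_(i <- s) F i) = \sum_(i <- s) a *F F i.
Proof.
apply/ffunP => t; rewrite ffunE !sum_ffunE big_distrr /=.
by apply: eq_bigr => i _; rewrite ffunE.
Qed.

Section StructureConstants.
Variables (T : finType) (C : T -> T -> T -> k).

Definition mulg (u v : {ffun T -> k}) : {ffun T -> k} :=
  [ffun t => \sum_p \sum_q u p * v q * C p q t].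

Hypothesis C_assoc : forall p q r t, \sum_s C p q s * C s r t = \sum_s C q r s * C p s t.

Lemma mulgA u v w : mulg (mulg u v) w = mulg u (mulg v w).
Proof.
apply/ffunP => t; rewrite !ffunE.
transitivity (\sum_s \sum_r \sum_p \sum_q u p * v q * C p q s * w r * C s r t).
  apply: eq_bigr => s _; apply: eq_bigr => r _; rewrite ffunE -mulrA big_distrl /=.
  apply: eq_bigr => p _; rewrite big_distrl /=; apply: eq_bigr => q _; ring.
rewrite exchange_big /=.
under eq_bigr => r _ do rewrite exchange_big /=.
under eq_bigr => r _ do under eq_bigr => p _ do rewrite exchange_big /=.
rewrite exchange_big /=.
under eq_bigr => p _ do rewrite exchange_big /=.
transitivity (\sum_p \sum_q \sum_r u p * v q * w r * (\sum_s C q r s * C p s t)).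
  apply: eq_bigr => p _; apply: eq_bigr => q _; apply: eq_bigr => r _.
  rewrite -C_assoc big_distrr /=; apply: eq_bigr => s _; ring.
symmetry.
transitivity (\sum_p \sum_s \sum_q \sum_r u p * v q * w r * C q r s * C p s t).
  apply: eq_bigr => p _; apply: eq_bigr => s _; rewrite ffunE big_distrr /= big_distrl /=.
  apply: eq_bigr => q _; rewrite big_distrr /= big_distrl /=; apply: eq_bigr => r _; ring.
under eq_bigr => p _ do rewrite exchange_big /=.
under eq_bigr => p _ do under eq_bigr => q _ do rewrite exchange_big /=.
apply: eq_bigr => p _; apply: eq_bigr => q _; apply: eq_bigr => r _.
rewrite big_distrr /=; apply: eq_bigr => s _; ring.
Qed.

Lemma mulg_1l e (u v : {ffun T -> k}) :
  (forall p, u p = (p == e)%:R) -> (forall q t, C e q t = (q == t)%:R) -> mulg u v = v.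
Proof.
move=> Hu HC; apply/ffunP => t; rewrite ffunE (bigD1 e) //=.
rewrite [X in _ + X](eq_bigr (fun _ => 0)) => [|p Hp]; last first.
  by rewrite big1 // => q _; rewrite Hu (negbTE Hp) !mul0r.
rewrite big1_eq addr0 (bigD1 t) //=.
rewrite [X in _ + X](eq_bigr (fun _ => 0)) => [|q Hq]; last by rewrite HC (negbTE Hq) mulr0.
by rewrite big1_eq Hu HC !eqxx mulr1 mul1r addr0.
Qed.
End StructureConstants.

Lemma decompH (u : H k) : u = \sum_p u p *F eb k p.
Proof.
apply/ffunP => t; rewrite sum_ffunE (bigD1 t) //= big1 => [|p Hp]; rewrite !ffunE.
  by rewrite eqxx mulr1 addr0.
by rewrite eq_sym (negbTE Hp) mulr0.
Qed.

Lemma lin_decomp (F : H k -> H k) :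
  (forall x y, F (x + y) = F x + F y) -> (forall c x, F (c *F x) = c *F F x) ->
  forall h, F h = \sum_p h p *F F (eb k p).
Proof.
move=> Fa Fs h.
have F0 : F 0 = 0.
  have -> : (0 : H k) = 0 *F 0 by apply/ffunP => t; rewrite !ffunE mul0r.
  by rewrite Fs; apply/ffunP => t; rewrite !ffunE !mul0r.
by rewrite {1}(decompH h) (big_morph F Fa F0); apply: eq_bigr => p _; rewrite Fs.
Qed.
End CoefficientVectors.

(* Exact scalars: the triple (a, b, e) stands for (a + b i) / 2^e, an element
   of Z[i][1/2].  Addition brings both operands to the larger exponent. *)
Definition gdy := (Z * Z * nat)%type.

Definition pow2Z (n : nat) : Z := iter n (Z.mul Z.two) Z.one.

Definition gdy0 : gdy := (Z0, Z0, 0%N).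
Definition gdy1 : gdy := (Z.one, Z0, 0%N).
Definition gdyN1 : gdy := (Zneg 1%positive, Z0, 0%N).
Definition gdy2 : gdy := (Z.two, Z0, 0%N).
Definition gdy_half : gdy := (Z.one, Z0, 1%N).
Definition gdy_i : gdy := (Z0, Z.one, 0%N).
Definition gdy_sign (n : nat) : gdy := if odd n then gdyN1 else gdy1.

Definition gdy_add (x y : gdy) : gdy :=
  let '(a, b, e) := x in let '(c, d, f) := y in
  if (e <= f)%N
  then (Z.add (Z.mul a (pow2Z (f - e))) c, Z.add (Z.mul b (pow2Z (f - e))) d, f)
  else (Z.add a (Z.mul c (pow2Z (e - f))), Z.add b (Z.mul d (pow2Z (e - f))), e).

Definition gdy_mul (x y : gdy) : gdy :=
  let '(a, b, e) := x in let '(c, d, f) := y in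
  (Z.sub (Z.mul a c) (Z.mul b d), Z.add (Z.mul a d) (Z.mul b c), (e + f)%N).

Definition gdy_is0 (x : gdy) : bool := Z.eqb x.1.1 Z0 && Z.eqb x.1.2 Z0.

Definition gdy_eqb (x y : gdy) : bool :=
  let '(a, b, e) := x in let '(c, d, f) := y in
  Z.eqb (Z.mul a (pow2Z f)) (Z.mul c (pow2Z e)) &&
  Z.eqb (Z.mul b (pow2Z f)) (Z.mul d (pow2Z e)).

(* (a + b i) / 2^e is nonzero when a^2 + b^2 is a power of 2 (below 2^40). *)
Definition gdy_unit (x : gdy) : bool :=
  has (fun m => Z.eqb (Z.add (Z.mul x.1.1 x.1.1) (Z.mul x.1.2 x.1.2)) (pow2Z m)) (iota 0 40).

Definition gdy_sum (s : seq nat) (f : nat -> gdy) : gdy :=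
  foldr (fun n acc => gdy_add (f n) acc) gdy0 s.

(* Product skipping zero left factors, which keeps sparse computations cheap. *)
Definition gdy_mulz (x y : gdy) : gdy := if gdy_is0 x then gdy0 else gdy_mul x y.

(* Coefficient lists; missing trailing entries are zero. *)
Definition cvec := seq gdy.

Fixpoint cv_add (u v : cvec) : cvec :=
  match u, v with
  | x :: u', y :: v' => gdy_add x y :: cv_add u' v'
  | [::], _ => v
  | _, [::] => u
  end.

Definition cv_scale (c : gdy) (u : cvec) : cvec := map (gdy_mul c) u.

Definition cv_lin (s : seq nat) (cf : nat -> gdy) (F : nat -> cvec) : cvec :=
  foldr (fun n acc => if gdy_is0 (cf n) then acc else cv_add (cv_scale (cf n) (F n)) acc) [::] s.

Definition cv_eqb (u v : cvec) : bool :=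
  all (fun i => gdy_eqb (nth gdy0 u i) (nth gdy0 v i)) (iota 0 (maxn (size u) (size v))).

Fixpoint cv_pair (m : nat) (u : cvec) (f : nat -> gdy) : gdy :=
  match u with
  | [::] => gdy0
  | x :: u' => if gdy_is0 x then cv_pair m.+1 u' f else gdy_add (gdy_mul x (f m)) (cv_pair m.+1 u' f)
  end.

Definition cv_mul (N : nat) (C : nat -> nat -> nat -> gdy) (u v : cvec) : cvec :=
  let u' := take N u in let v' := take N v in
  mkseq (fun t => cv_pair 0 u' (fun p => cv_pair 0 v' (fun q => C p q t))) N.

Definition enc1 (t : B) : nat := (4 * val t.1 + val t.2)%N.
Definition dec1 (n : nat) : B := (inord (n %/ 4), inord (n %% 4)).
Definition enc2 (t : B * B) : nat := (8 * enc1 t.1 + enc1 t.2)%N.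
Definition dec2 (n : nat) : B * B := (dec1 (n %/ 8), dec1 (n %% 8)).
Definition enc3 (t : B * B * B) : nat := (8 * enc2 t.1 + enc1 t.2)%N.
Definition dec3 (n : nat) : B * B * B := (dec2 (n %/ 8), dec1 (n %% 8)).

(* The computational model of H_{+-}(8), with j = i. *)
Definition c_cst (n m u : nat) : gdy :=
  if (u %/ 4 == (n %/ 4 + m %/ 4) %% 2)%N && (u %% 4 == n %% 4 + m %% 4)%N
  then gdy_sign (n %% 4 * (m %/ 4)) else gdy0.
Definition c_cst2 (n m u : nat) : gdy :=
  gdy_mulz (c_cst (n %/ 8) (m %/ 8) (u %/ 8)) (c_cst (n %% 8) (m %% 8) (u %% 8)).
Definition c_cst3 (n m u : nat) : gdy :=
  gdy_mulz (gdy_mulz (c_cst (n %/ 8 %/ 8) (m %/ 8 %/ 8) (u %/ 8 %/ 8))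
                     (c_cst (n %/ 8 %% 8) (m %/ 8 %% 8) (u %/ 8 %% 8)))
           (c_cst (n %% 8) (m %% 8) (u %% 8)).

Definition c_eb (n : nat) : cvec := mkseq (fun i => if i == n then gdy1 else gdy0) 8.
Definition c_mul := cv_mul 8 c_cst.
Definition c_mul2 := cv_mul 64 c_cst2.
Definition c_mul3 := cv_mul 512 c_cst3.
Definition c_tens (u v : cvec) : cvec :=
  mkseq (fun n => gdy_mul (nth gdy0 u (n %/ 8)) (nth gdy0 v (n %% 8))) 64.
Definition c_tens3 (u v w : cvec) : cvec :=
  mkseq (fun n => gdy_mul (gdy_mul (nth gdy0 u (n %/ 8 %/ 8)) (nth gdy0 v (n %/ 8 %% 8)))
                          (nth gdy0 w (n %% 8))) 512.
Definition c_one := c_eb 0.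
Definition c_g := c_eb 4.
Definition c_x := c_eb 1.
Definition c_one2 := c_tens c_one c_one.
Definition c_one3 := c_tens3 c_one c_one c_one.
Definition c_pow (u : cvec) (n : nat) := iter n (c_mul u) c_one.
Definition c_pow2 (u : cvec) (n : nat) := iter n (c_mul2 u) c_one2.
Definition c_pplus := cv_scale gdy_half (cv_add c_one c_g).
Definition c_pminus := cv_scale gdy_half (cv_add c_one (cv_scale gdyN1 c_g)).
Definition c_Phi :=
  cv_add c_one3 (cv_scale gdyN1 (cv_scale gdy2 (c_tens3 c_pminus c_pminus c_pminus))).

Definition c_DeltaG := c_tens c_g c_g.
Definition c_DeltaX :=
  cv_add (cv_add (c_tens c_x (cv_add c_pplus (cv_scale gdy_i c_pminus)))
                 (c_tens c_one (c_mul c_pplus c_x)))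
         (c_tens c_g (c_mul c_pminus c_x)).
Definition c_DeltaB (n : nat) := c_mul2 (c_pow2 c_DeltaG (n %/ 4)) (c_pow2 c_DeltaX (n %% 4)).
Definition c_DeltaTab := Eval vm_compute in mkseq c_DeltaB 8.
Lemma c_DeltaTabE : c_DeltaTab = mkseq c_DeltaB 8. Proof. by vm_compute. Qed.
Definition c_Delta (u : cvec) := cv_lin (iota 0 8) (nth gdy0 u) (nth [::] c_DeltaTab).

Definition c_SX := cv_scale gdyN1 (c_mul c_x (cv_add c_pplus (cv_scale gdy_i c_pminus))).
Definition c_SB (n : nat) := c_mul (c_pow c_SX (n %% 4)) (c_pow c_g (n %/ 4)).
Definition c_STab := Eval vm_compute in mkseq c_SB 8.
Lemma c_STabE : c_STab = mkseq c_SB 8. Proof. by vm_compute. Qed.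
Definition c_S (u : cvec) := cv_lin (iota 0 8) (nth gdy0 u) (nth [::] c_STab).

(* Row n is the coefficient list of S^{-1}(basis element n). *)
Local Notation zp1 := (Zpos 1%positive).
Local Notation zm1 := (Zneg 1%positive).
Local Notation o := gdy0.
Definition c_SinvTab : seq cvec :=
  [:: [:: gdy1; o; o; o; o; o; o; o];
      [:: o; (zm1, zp1, 1%N); o; o; o; (zm1, zm1, 1%N); o; o];
      [:: o; o; (Z0, zm1, 0%N); o; o; o; o; o];
      [:: o; o; o; (zp1, zp1, 1%N); o; o; o; (zm1, zp1, 1%N)];
      [:: o; o; o; o; gdy1; o; o; o];
      [:: o; (zp1, zp1, 1%N); o; o; o; (zp1, zm1, 1%N); o; o];
      [:: o; o; o; o; o; o; (Z0, zm1, 0%N); o];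
      [:: o; o; o; (zp1, zm1, 1%N); o; o; o; (zm1, zm1, 1%N)]].
Definition c_Sinv (u : cvec) := cv_lin (iota 0 8) (nth gdy0 u) (nth [::] c_SinvTab).

Lemma c_SinvTab_ok : all (fun n => cv_eqb (c_S (nth [::] c_SinvTab n)) (c_eb n)) (iota 0 8).
Proof. by vm_compute. Qed.

Lemma c_cst_assoc : all (fun a => all (fun b => all (fun c => all (fun d =>
    gdy_eqb (gdy_sum (iota 0 8) (fun m => gdy_mul (c_cst a b m) (c_cst m c d)))
            (gdy_sum (iota 0 8) (fun m => gdy_mul (c_cst b c m) (c_cst a m d))))
  (iota 0 8)) (iota 0 8)) (iota 0 8)) (iota 0 8).
Proof. by vm_compute. Qed.

Lemma c_cst_unit :
  all (fun m => all (fun u => gdy_eqb (c_cst 0 m u) (if m == u then gdy1 else gdy0)) (iota 0 8))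
      (iota 0 8).
Proof. by vm_compute. Qed.

Definition c_PhiV := Eval vm_compute in c_Phi.
Lemma c_PhiVE : c_PhiV = c_Phi. Proof. by vm_compute. Qed.

Lemma c_Phi_invol : cv_eqb (c_mul3 c_PhiV c_PhiV) c_one3. Proof. by vm_compute. Qed.
Lemma c_Phi_mul1 : cv_eqb (c_mul3 c_PhiV c_one3) c_PhiV. Proof. by vm_compute. Qed.

(* Phi^{-1} = Phi, so both reassociators are represented by c_PhiV. *)
Definition c_gamma : cvec :=
  cv_lin (iota 0 512) (nth gdy0 c_PhiV) (fun n => cv_lin (iota 0 512) (nth gdy0 c_PhiV) (fun m =>
    c_mul2 (c_tens (c_mul (c_mul (c_S (c_mul (c_eb (m %/ 8 %/ 8)) (c_eb (n %/ 8 %% 8)))) c_g)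
                          (c_eb (m %/ 8 %% 8)))
                   (c_mul (c_mul (c_S (c_eb (n %/ 8 %/ 8))) c_g) (c_eb (m %% 8))))
           (c_Delta (c_eb (n %% 8))))).
Definition c_gammaV := Eval vm_compute in c_gamma.
Lemma c_gammaVE : c_gammaV = c_gamma. Proof. by vm_compute. Qed.

Definition c_delta : cvec :=
  cv_lin (iota 0 512) (nth gdy0 c_PhiV) (fun n => cv_lin (iota 0 512) (nth gdy0 c_PhiV) (fun m =>
    c_mul2 (c_Delta (c_eb (n %/ 8 %/ 8)))
      (c_tens (c_mul (c_mul (c_eb (m %/ 8 %/ 8)) c_one) (c_S (c_eb (n %% 8))))
              (c_mul (c_mul (c_eb (m %/ 8 %% 8)) c_one)
                     (c_S (c_mul (c_eb (n %/ 8 %% 8)) (c_eb (m %% 8)))))))).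
Definition c_deltaV := Eval vm_compute in c_delta.
Lemma c_deltaVE : c_deltaV = c_delta. Proof. by vm_compute. Qed.

Definition c_SSop (T : cvec) : cvec :=
  cv_lin (iota 0 64) (nth gdy0 T) (fun n => c_tens (c_S (c_eb (n %% 8))) (c_S (c_eb (n %/ 8)))).

Definition c_f : cvec :=
  cv_lin (iota 0 512) (nth gdy0 c_PhiV) (fun m =>
    c_mul2 (c_mul2 (c_SSop (c_Delta (c_eb (m %/ 8 %/ 8)))) c_gammaV)
           (c_Delta (c_mul (c_mul (c_eb (m %/ 8 %% 8)) c_one) (c_S (c_eb (m %% 8)))))).
Definition c_fV := Eval vm_compute in c_f.
Lemma c_fVE : c_fV = c_f. Proof. by vm_compute. Qed.

Definition c_finv : cvec :=
  cv_lin (iota 0 512) (nth gdy0 c_PhiV) (fun m =>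
    c_mul2 (c_mul2 (c_Delta (c_mul (c_mul (c_S (c_eb (m %/ 8 %/ 8))) c_g) (c_eb (m %/ 8 %% 8))))
                   c_deltaV)
           (c_SSop (c_Delta (c_eb (m %% 8))))).
Definition c_finvV := Eval vm_compute in c_finv.
Lemma c_finvVE : c_finvV = c_finv. Proof. by vm_compute. Qed.

Definition c_pR : cvec :=
  cv_lin (iota 0 512) (nth gdy0 c_PhiV) (fun m =>
    c_tens (c_eb (m %/ 8 %/ 8)) (c_mul (c_mul (c_eb (m %/ 8 %% 8)) c_one) (c_S (c_eb (m %% 8))))).
Definition c_pRV := Eval vm_compute in c_pR.
Lemma c_pRVE : c_pRV = c_pR. Proof. by vm_compute. Qed.

Definition c_qR : cvec :=
  cv_lin (iota 0 512) (nth gdy0 c_PhiV) (fun n =>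
    c_tens (c_eb (n %/ 8 %/ 8)) (c_mul (c_Sinv (c_mul c_g (c_eb (n %% 8)))) (c_eb (n %/ 8 %% 8)))).
Definition c_qRV := Eval vm_compute in c_qR.
Lemma c_qRVE : c_qRV = c_qR. Proof. by vm_compute. Qed.

Definition c_U : cvec :=
  cv_lin (iota 0 64) (nth gdy0 c_finvV) (fun n => cv_lin (iota 0 64) (nth gdy0 c_qRV) (fun m =>
    c_tens (c_mul (c_eb (n %/ 8)) (c_S (c_eb (m %% 8))))
           (c_mul (c_eb (n %% 8)) (c_S (c_eb (m %/ 8)))))).
Definition c_V : cvec :=
  cv_lin (iota 0 64) (nth gdy0 c_fV) (fun n => cv_lin (iota 0 64) (nth gdy0 c_pRV) (fun m =>
    c_tens (c_Sinv (c_mul (c_eb (n %% 8)) (c_eb (m %% 8))))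
           (c_Sinv (c_mul (c_eb (n %/ 8)) (c_eb (m %/ 8)))))).

Lemma c_U_ok : cv_eqb c_U (c_tens c_g c_one). Proof. by vm_compute. Qed.
Lemma c_V_ok : cv_eqb c_V c_one2. Proof. by vm_compute. Qed.

(* The cointegral condition for h = basis element n, with U = g (x) 1 and
   V = 1 (x) 1 substituted: both sides are written as elements of H (x) H
   whose second factor is to be evaluated by lambda. *)
Definition c_mu (u : cvec) : gdy :=
  gdy_sum (iota 0 8) (fun p =>
    gdy_mul (nth gdy0 u p) (if (p %% 4 == 0)%N then gdy_sign (p %/ 4) else gdy0)).
Definition c_lhs (n : nat) : cvec :=
  cv_lin (iota 0 64) (nth gdy0 c_one2) (fun a =>
  cv_lin (iota 0 64) (nth gdy0 (c_tens c_g c_one)) (fun c =>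
  cv_lin (iota 0 64) (nth gdy0 (c_Delta (c_eb n))) (fun d =>
    c_tens (c_mul (c_mul (c_eb (a %/ 8)) (c_eb (d %/ 8))) (c_eb (c %/ 8)))
           (c_mul (c_mul (c_eb (a %% 8)) (c_eb (d %% 8))) (c_eb (c %% 8)))))).
Definition c_rhs (n : nat) : cvec :=
  cv_lin (iota 0 512) (nth gdy0 c_PhiV) (fun m =>
    cv_scale (c_mu (c_eb (m %/ 8 %/ 8)))
             (c_tens (c_eb (m %% 8)) (c_mul (c_eb n) (c_S (c_eb (m %/ 8 %% 8)))))).
Definition c_coint (n : nat) : cvec := cv_add (c_lhs n) (cv_scale gdyN1 (c_rhs n)).
Definition c_cointTab := Eval vm_compute in mkseq c_coint 8.
Lemma c_cointTabE : c_cointTab = mkseq c_coint 8. Proof. by vm_compute. Qed.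

(* Equation number t of the system attached to basis element n: its entry r
   is the coefficient of lambda(basis element r). *)
Definition c_eqn (n t : nat) : cvec :=
  mkseq (fun r => nth gdy0 (nth [::] c_cointTab n) (8 * t + r)) 8.

Lemma c_eqn_col3 :
  all (fun n => all (fun t => gdy_is0 (nth gdy0 (c_eqn n t) 3)) (iota 0 8)) (iota 0 8).
Proof. by vm_compute. Qed.

(* For r0 <> 3, a combination of equations whose only nonzero coefficient,
   a unit, is the one of lambda(basis element r0). *)
Definition c_elim (r0 : nat) : cvec :=
  match r0 with
  | 0 => c_eqn 6 2
  | 1 => c_eqn 5 0
  | 2 => cv_add (c_eqn 2 0) (cv_scale gdyN1 (c_eqn 6 0))
  | 4 => c_eqn 2 6
  | 5 => cv_add (c_eqn 3 2) (cv_scale (gdy_mul gdy_half gdy_i) (c_eqn 5 0))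
  | 6 => cv_add (c_eqn 2 0) (c_eqn 6 0)
  | _ => c_eqn 3 0
  end.

Definition isolates (row : cvec) (r0 : nat) : bool :=
  all (fun r => (r == r0) || gdy_is0 (nth gdy0 row r)) (iota 0 8) && gdy_unit (nth gdy0 row r0).

Lemma c_elim_ok : all (fun r0 => isolates (c_elim r0) r0) [:: 0; 1; 2; 4; 5; 6; 7]%N.
Proof. by vm_compute. Qed.

Lemma enc1_lt t : (enc1 t < 8)%N.
Proof. by case: t => [[a Ha] [b Hb]]; rewrite /enc1 /=; lia. Qed.
Lemma enc1_1 t : (enc1 t %/ 4 = val t.1)%N.
Proof. by case: t => [[a Ha] [b Hb]]; rewrite /enc1 /=; lia. Qed.
Lemma enc1_2 t : (enc1 t %% 4 = val t.2)%N.
Proof. by case: t => [[a Ha] [b Hb]]; rewrite /enc1 /=; lia. Qed.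
Lemma dec1_1 n : (n < 8)%N -> val (dec1 n).1 = (n %/ 4)%N.
Proof. by move=> lt_n; rewrite /dec1 /= inordK //; lia. Qed.
Lemma dec1_2 n : val (dec1 n).2 = (n %% 4)%N.
Proof. by rewrite /dec1 /= inordK //; lia. Qed.
Lemma enc1K t : dec1 (enc1 t) = t.
Proof. by case: t => a b; rewrite /dec1 (enc1_1 (a, b)) (enc1_2 (a, b)) /= !inord_val. Qed.
Lemma dec1K n : (n < 8)%N -> enc1 (dec1 n) = n.
Proof. by move=> lt_n; rewrite /enc1 dec1_1 // dec1_2; lia. Qed.

Lemma enc2_lt t : (enc2 t < 64)%N.
Proof. by have := enc1_lt t.1; have := enc1_lt t.2; rewrite /enc2; lia. Qed.
Lemma enc2_1 t : (enc2 t %/ 8 = enc1 t.1)%N.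
Proof. by have := enc1_lt t.2; rewrite /enc2; lia. Qed.
Lemma enc2_2 t : (enc2 t %% 8 = enc1 t.2)%N.
Proof. by have := enc1_lt t.2; rewrite /enc2; lia. Qed.
Lemma enc2K t : dec2 (enc2 t) = t.
Proof. by case: t => a b; rewrite /dec2 enc2_1 enc2_2 !enc1K. Qed.
Lemma dec2K n : (n < 64)%N -> enc2 (dec2 n) = n.
Proof. by move=> lt_n; rewrite /enc2 /dec2 /= !dec1K; lia. Qed.

Lemma enc3_lt t : (enc3 t < 512)%N.
Proof. by have := enc2_lt t.1; have := enc1_lt t.2; rewrite /enc3; lia. Qed.
Lemma enc3_1 t : (enc3 t %/ 8 = enc2 t.1)%N.
Proof. by have := enc1_lt t.2; rewrite /enc3; lia. Qed.
Lemma enc3_2 t : (enc3 t %% 8 = enc1 t.2)%N.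
Proof. by have := enc1_lt t.2; rewrite /enc3; lia. Qed.
Lemma enc3K t : dec3 (enc3 t) = t.
Proof. by case: t => a b; rewrite /dec3 enc3_1 enc3_2 enc2K enc1K. Qed.
Lemma dec3K n : (n < 512)%N -> enc3 (dec3 n) = n.
Proof. by move=> lt_n; rewrite /enc3 /dec3 /= dec2K ?dec1K; lia. Qed.

Lemma mem_iota8 n : (n \in iota 0 8) = (n < 8)%N.
Proof. by rewrite mem_iota add0n. Qed.

Section Interpretation.
Variables (k : fieldType) (j : k).
Hypothesis j_sqr : j * j = -1.
Hypothesis two_nz : (2 : k) != 0.

Definition zR (z : Z) : k := (int_of_Z z)%:~R.
Definition gval (x : gdy) : k := (zR x.1.1 + zR x.1.2 * j) * 2^-1 ^+ x.2.

Lemma zRD a b : zR (Z.add a b) = zR a + zR b.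
Proof. by rewrite /zR -intrD -rmorphD. Qed.
Lemma zRM a b : zR (Z.mul a b) = zR a * zR b.
Proof. by rewrite /zR -intrM -rmorphM. Qed.
Lemma zRB a b : zR (Z.sub a b) = zR a - zR b.
Proof. by rewrite -Z.add_opp_r zRD /zR -mulrNz -rmorphN. Qed.
Lemma zRpow2 n : zR (pow2Z n) = 2 ^+ n.
Proof. by elim: n => [|n IH] //; rewrite /pow2Z iterS -/(pow2Z n) zRM IH exprS. Qed.

Lemma pow2_half n : (2 : k) ^+ n * 2^-1 ^+ n = 1.
Proof. by rewrite -exprMn mulfV // expr1n. Qed.

Lemma gval0 : gval gdy0 = 0. Proof. by rewrite /gval /= mul0r add0r mul0r. Qed.
Lemma gval1 : gval gdy1 = 1. Proof. by rewrite /gval /= mul0r addr0 mulr1. Qed.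
Lemma gvalN1 : gval gdyN1 = -1. Proof. by rewrite /gval /= mul0r addr0 mulr1. Qed.
Lemma gval2 : gval gdy2 = 2. Proof. by rewrite /gval /= mul0r addr0 mulr1. Qed.
Lemma gval_half : gval gdy_half = 2^-1. Proof. by rewrite /gval /= mul0r addr0 mul1r. Qed.
Lemma gval_i : gval gdy_i = j. Proof. by rewrite /gval /= add0r mul1r mulr1. Qed.
Lemma gval_sign n : gval (gdy_sign n) = (-1) ^+ n.
Proof. by rewrite /gdy_sign -signr_odd; case: (odd n); rewrite ?gvalN1 ?gval1. Qed.

Lemma gvalD x y : gval (gdy_add x y) = gval x + gval y.
Proof.
case: x => [[a b] e]; case: y => [[c d] f]; rewrite /gdy_add /gval /=.
case: leqP => [le_ef|lt_fe].
- rewrite !zRD !zRM zRpow2 -(subnK le_ef) exprD addnK.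
  have := pow2_half (f - e); set v := 2 ^+ _; set u := 2^-1 ^+ _; set w := 2^-1 ^+ e => vu.
  have -> : (zR a * v + zR c + (zR b * v + zR d) * j) * (u * w) =
    (zR a + zR b * j) * w * (v * u) + (zR c + zR d * j) * (u * w) by ring.
  by rewrite vu mulr1.
- rewrite !zRD !zRM zRpow2 -(subnK (ltnW lt_fe)) exprD addnK.
  have := pow2_half (e - f); set v := 2 ^+ _; set u := 2^-1 ^+ _; set w := 2^-1 ^+ f => vu.
  have -> : (zR a + zR c * v + (zR b + zR d * v) * j) * (u * w) =
    (zR a + zR b * j) * (u * w) + (zR c + zR d * j) * w * (v * u) by ring.
  by rewrite vu mulr1.
Qed.

Lemma gvalM x y : gval (gdy_mul x y) = gval x * gval y.
Proof.
case: x => [[a b] e]; case: y => [[c d] f]; rewrite /gdy_mul /gval /= zRB zRD !zRM exprD.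
have -> : (zR a + zR b * j) * 2^-1 ^+ e * ((zR c + zR d * j) * 2^-1 ^+ f) =
  (zR a * zR c - zR b * zR d + (zR a * zR d + zR b * zR c) * j) * (2^-1 ^+ e * 2^-1 ^+ f)
  + zR b * zR d * (j * j + 1) * (2^-1 ^+ e * 2^-1 ^+ f) by ring.
by rewrite j_sqr addNr mulr0 mul0r addr0.
Qed.

Lemma gval_is0 x : gdy_is0 x -> gval x = 0.
Proof.
case: x => [[a b] e]; rewrite /gdy_is0 /gval /= => /andP[/Z.eqb_spec -> /Z.eqb_spec ->].
by rewrite mul0r addr0 mul0r.
Qed.

(* (a + b i)(a - b i) = a^2 + b^2 is a power of 2, hence nonzero in k. *)
Lemma gval_unit x : gdy_unit x -> gval x != 0.
Proof.
case: x => [[a b] e] /= /hasP [m _ /Z.eqb_spec E]; apply/negP => /eqP x0.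
have : (zR a * zR a + zR b * zR b) * (2^-1 ^+ e * 2^-1 ^+ e) = 0.
  have -> : zR a * zR a + zR b * zR b = (zR a + zR b * j) * (zR a - zR b * j).
    by rewrite -[zR b * zR b]mulr1 -[1 : k]opprK -j_sqr; ring.
  by move: x0; rewrite /gval /= => x0; rewrite mulrACA x0 mul0r.
rewrite -!zRM -zRD E zRpow2 => /eqP.
by rewrite !mulf_eq0 !expf_eq0 invr_eq0 (negbTE two_nz) !andbF.
Qed.

Lemma gval_eqb x y : gdy_eqb x y -> gval x = gval y.
Proof.
case: x => [[a b] e]; case: y => [[c d] f].
rewrite /gdy_eqb /gval /= => /andP[/Z.eqb_spec E1 /Z.eqb_spec E2].
have {}E1 := congr1 zR E1; have {}E2 := congr1 zR E2; rewrite !zRM !zRpow2 in E1 E2.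
transitivity ((zR a * 2 ^+ f + zR b * 2 ^+ f * j) * 2^-1 ^+ e * 2^-1 ^+ f).
  have -> : (zR a * 2 ^+ f + zR b * 2 ^+ f * j) * 2^-1 ^+ e * 2^-1 ^+ f =
    (zR a + zR b * j) * 2^-1 ^+ e * (2 ^+ f * 2^-1 ^+ f) by ring.
  by rewrite pow2_half mulr1.
rewrite E1 E2.
have -> : (zR c * 2 ^+ e + zR d * 2 ^+ e * j) * 2^-1 ^+ e * 2^-1 ^+ f =
  (zR c + zR d * j) * 2^-1 ^+ f * (2 ^+ e * 2^-1 ^+ e) by ring.
by rewrite pow2_half mulr1.
Qed.

Lemma gval_sum s f : gval (gdy_sum s f) = \sum_(n <- s) gval (f n).
Proof.
elim: s => [|n s IH]; first by rewrite big_nil gval0.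
by rewrite big_cons /= gvalD IH.
Qed.

Lemma gval_mulz x y : gval (gdy_mulz x y) = gval x * gval y.
Proof. by rewrite /gdy_mulz; case: ifP => [/gval_is0 ->|_]; rewrite ?gval0 ?mul0r ?gvalM. Qed.

Lemma gval_pair m u f :
  gval (cv_pair m u f) = \sum_(i <- iota 0 (size u)) gval (nth gdy0 u i) * gval (f (m + i)%N).
Proof.
elim: u m => [|x u IH] m /=; first by rewrite big_nil gval0.
rewrite big_cons -(addn0 1%N) iotaDl big_map.
have E : \sum_(i <- iota 0 (size u)) gval (nth gdy0 (x :: u) (1 + i)) * gval (f (m + (1 + i))%N)
         = gval (cv_pair m.+1 u f).
  by rewrite IH; apply: eq_bigr => i _; rewrite add1n addSnnS.
case: ifP => [/gval_is0 ->|_]; first by rewrite -E mul0r add0r.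
by rewrite gvalD gvalM addn0 -E.
Qed.

Lemma gval_pair_take N u f :
  gval (cv_pair 0 (take N u) f) = \sum_(n <- iota 0 N) gval (nth gdy0 u n) * gval (f n).
Proof.
rewrite gval_pair size_take_min.
have le_min : (minn N (size u) <= N)%N by rewrite geq_minl.
rewrite -[in iota 0 N](subnKC le_min) iotaD big_cat add0n.
rewrite [X in _ = _ + X]big_seq [X in _ = _ + X]big1 ?addr0 => [|i]; last first.
  by rewrite mem_iota => /andP[le_i lt_i]; rewrite nth_default ?gval0 ?mul0r //; lia.
rewrite !big_seq; apply: eq_bigr => i; rewrite mem_iota add0n => /andP[_ lt_i].
by rewrite add0n nth_take //; lia.
Qed.

Lemma gval_nth_add u v i :
  gval (nth gdy0 (cv_add u v) i) = gval (nth gdy0 u i) + gval (nth gdy0 v i).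
Proof.
by elim: u v i => [|x u IH] [|y v] [|i] /=; rewrite ?gval0 ?add0r ?addr0 ?gvalD.
Qed.

Lemma gval_nth_scale c u i : gval (nth gdy0 (cv_scale c u) i) = gval c * gval (nth gdy0 u i).
Proof.
case: (ltnP i (size u)) => [lt_i|le_i]; first by rewrite (nth_map gdy0) // gvalM.
by rewrite !nth_default ?size_map // gval0 mulr0.
Qed.

Lemma gval_nth_lin s cf F i :
  gval (nth gdy0 (cv_lin s cf F) i) = \sum_(n <- s) gval (cf n) * gval (nth gdy0 (F n) i).
Proof.
elim: s => [|n s IH]; first by rewrite big_nil /= nth_nil gval0.
rewrite big_cons /=; case: ifP => [/gval_is0 ->|_]; first by rewrite IH mul0r add0r.
by rewrite gval_nth_add gval_nth_scale IH.
Qed.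

Section Encoding.
Variables (T : finType) (N : nat) (enc : T -> nat) (dec : nat -> T).
Hypothesis enc_lt : forall t, (enc t < N)%N.
Hypothesis encK : forall t, dec (enc t) = t.
Hypothesis decK : forall n, (n < N)%N -> enc (dec n) = n.

Definition cvec_val (c : cvec) : {ffun T -> k} := [ffun t => gval (nth gdy0 c (enc t))].

Lemma sum_enc (V : zmodType) (F : T -> V) : \sum_t F t = \sum_(n <- iota 0 N) F (dec n).
Proof.
have -> : iota 0 N = index_iota 0 N by rewrite /index_iota subn0.
rewrite big_mkord.
have bij : bijective (fun i : 'I_N => dec i).
  exists (fun t => Ordinal (enc_lt t)) => [i|t] /=; last by rewrite encK.
  by apply: val_inj => /=; rewrite decK.
by rewrite (reindex _ (onW_bij _ bij)).
Qed.

Lemma cvec_valD u v : cvec_val u + cvec_val v = cvec_val (cv_add u v).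
Proof. by apply/ffunP => t; rewrite !ffunE gval_nth_add. Qed.

Lemma cvec_valZ c u : gval c *F cvec_val u = cvec_val (cv_scale c u).
Proof. by apply/ffunP => t; rewrite !ffunE gval_nth_scale. Qed.

Lemma cvec_val_lin s cf F : \sum_(n <- s) gval (cf n) *F cvec_val (F n) = cvec_val (cv_lin s cf F).
Proof.
apply/ffunP => t; rewrite sum_ffunE ffunE gval_nth_lin.
by apply: eq_bigr => n _; rewrite !ffunE.
Qed.

Lemma cvec_val_eqb u v : cv_eqb u v -> cvec_val u = cvec_val v.
Proof.
move=> /allP uv; apply/ffunP => t; rewrite !ffunE.
case: (ltnP (enc t) (maxn (size u) (size v))) => [lt_t|].
  by apply: gval_eqb; apply: uv; rewrite mem_iota.
by rewrite geq_max => /andP[le_u le_v]; rewrite !nth_default.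
Qed.

Lemma cvec_val_dec c n : (n < N)%N -> cvec_val c (dec n) = gval (nth gdy0 c n).
Proof. by move=> lt_n; rewrite ffunE decK. Qed.

Variables (C : T -> T -> T -> k) (Cc : nat -> nat -> nat -> gdy).
Hypothesis C_val : forall n m t, (n < N)%N -> (m < N)%N -> C (dec n) (dec m) t = gval (Cc n m (enc t)).

Lemma cvec_val_mul u v :
  [ffun t => \sum_p \sum_q cvec_val u p * cvec_val v q * C p q t] = cvec_val (cv_mul N Cc u v).
Proof.
apply/ffunP => t; rewrite !ffunE nth_mkseq // gval_pair_take sum_enc.
apply: eq_big_seq => n; rewrite mem_iota add0n => /andP[_ lt_n].
rewrite gval_pair_take sum_enc big_distrr /= cvec_val_dec //.
apply: eq_big_seq => m; rewrite mem_iota add0n => /andP[_ lt_m].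
by rewrite cvec_val_dec // C_val // mulrA.
Qed.
End Encoding.

Lemma sum_cvec_val_map (T U V : finType) (N : nat) (enc : T -> nat) (dec : nat -> T)
    (encU : U -> nat) (F : {ffun U -> k} -> {ffun V -> k}) :
  (forall t, (enc t < N)%N) -> (forall t, dec (enc t) = t) ->
  (forall n, (n < N)%N -> enc (dec n) = n) ->
  (forall x y, F (x + y) = F x + F y) -> (forall c x, F (c *F x) = c *F F x) ->
  forall (c : cvec) (X : T -> {ffun V -> k}) (Xc : nat -> cvec),
  (forall n, (n < N)%N -> X (dec n) = F (cvec_val encU (Xc n))) ->
  \sum_p cvec_val enc c p *F X p = F (cvec_val encU (cv_lin (iota 0 N) (nth gdy0 c) Xc)).
Proof.
move=> enc_lt encK decK Fa Fs c X Xc HX.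
have F0 : F 0 = 0.
  have -> : (0 : {ffun U -> k}) = 0 *F 0 by apply/ffunP => t; rewrite !ffunE mul0r.
  by rewrite Fs; apply/ffunP => t; rewrite !ffunE !mul0r.
rewrite -cvec_val_lin (big_morph F Fa F0) (sum_enc enc_lt encK decK).
apply: eq_big_seq => n; rewrite mem_iota add0n => /andP[_ lt_n].
by rewrite Fs (cvec_val_dec decK) // HX.
Qed.

Local Notation cv1 := (@cvec_val B enc1).
Local Notation cv2 := (@cvec_val (B * B)%type enc2).
Local Notation cv3 := (@cvec_val (B * B * B)%type enc3).

Lemma sum_lin1 (U : finType) (encU : U -> nat) c X Xc :
  (forall n, (n < 8)%N -> X (dec1 n) = cvec_val encU (Xc n)) ->
  \sum_p cv1 c p *F X p = cvec_val encU (cv_lin (iota 0 8) (nth gdy0 c) Xc).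
Proof. exact: (sum_cvec_val_map (F := id) enc1_lt enc1K dec1K). Qed.
Lemma sum_lin2 (U : finType) (encU : U -> nat) c X Xc :
  (forall n, (n < 64)%N -> X (dec2 n) = cvec_val encU (Xc n)) ->
  \sum_p cv2 c p *F X p = cvec_val encU (cv_lin (iota 0 64) (nth gdy0 c) Xc).
Proof. exact: (sum_cvec_val_map (F := id) enc2_lt enc2K dec2K). Qed.
Lemma sum_lin3 (U : finType) (encU : U -> nat) c X Xc :
  (forall n, (n < 512)%N -> X (dec3 n) = cvec_val encU (Xc n)) ->
  \sum_p cv3 c p *F X p = cvec_val encU (cv_lin (iota 0 512) (nth gdy0 c) Xc).
Proof. exact: (sum_cvec_val_map (F := id) enc3_lt enc3K dec3K). Qed.

Lemma cstE n m t : (n < 8)%N -> (m < 8)%N ->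
  cst k (dec1 n) (dec1 m) t = gval (c_cst n m (enc1 t)).
Proof.
move=> lt_n lt_m; rewrite /cst /c_cst !dec1_1 // !dec1_2 enc1_1 enc1_2.
by case: ifP => _; rewrite ?gval_sign ?gval0.
Qed.

Lemma cst2E n m t : (n < 64)%N -> (m < 64)%N ->
  cst k (dec2 n).1 (dec2 m).1 t.1 * cst k (dec2 n).2 (dec2 m).2 t.2 = gval (c_cst2 n m (enc2 t)).
Proof. by move=> lt_n lt_m; rewrite /c_cst2 gval_mulz enc2_1 enc2_2 /= !cstE //; lia. Qed.

Lemma cst3E n m t : (n < 512)%N -> (m < 512)%N ->
  cst k (dec3 n).1.1 (dec3 m).1.1 t.1.1 * cst k (dec3 n).1.2 (dec3 m).1.2 t.1.2 *
  cst k (dec3 n).2 (dec3 m).2 t.2 = gval (c_cst3 n m (enc3 t)).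
Proof.
by move=> lt_n lt_m; rewrite /c_cst3 !gval_mulz enc3_1 enc3_2 enc2_1 enc2_2 /= !cstE //; lia.
Qed.

Lemma mulHE u v : mulH (cv1 u) (cv1 v) = cv1 (c_mul u v).
Proof. exact: (cvec_val_mul enc1_lt enc1K dec1K cstE). Qed.
Lemma mulH2E u v : mulH2 (cv2 u) (cv2 v) = cv2 (c_mul2 u v).
Proof. exact: (cvec_val_mul enc2_lt enc2K dec2K cst2E). Qed.
Lemma mulH3E u v : mulH3 (cv3 u) (cv3 v) = cv3 (c_mul3 u v).
Proof. exact: (cvec_val_mul enc3_lt enc3K dec3K cst3E). Qed.

Lemma ebE n : (n < 8)%N -> eb k (dec1 n) = cv1 (c_eb n).
Proof.
move=> lt_n; apply/ffunP => t; rewrite !ffunE nth_mkseq ?enc1_lt //.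
rewrite -[in enc1 t == n](dec1K lt_n) (inj_eq (can_inj enc1K)).
by case: (t == _); rewrite ?gval1 ?gval0.
Qed.

Lemma dec1_0 : dec1 0 = (ord0, ord0).
Proof. by rewrite /dec1; congr pair; apply: val_inj; rewrite /= inordK. Qed.

Lemma oneE : oneH k = cv1 c_one. Proof. by rewrite /oneH -dec1_0 ebE. Qed.
Lemma gE : gH k = cv1 c_g.
Proof. by rewrite /gH -ebE //; congr eb; congr pair; apply: val_inj; rewrite /= !inordK. Qed.
Lemma xE : Defs.xH k = cv1 c_x.
Proof. by rewrite /Defs.xH -ebE //; congr eb; congr pair; apply: val_inj; rewrite /= !inordK. Qed.

Lemma tensE u v : tens (cv1 u) (cv1 v) = cv2 (c_tens u v).
Proof.
by apply/ffunP => t; rewrite !ffunE nth_mkseq ?enc2_lt // gvalM enc2_1 enc2_2 ?ffunE.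
Qed.
Lemma tens3E u v w : tens3 (cv1 u) (cv1 v) (cv1 w) = cv3 (c_tens3 u v w).
Proof.
apply/ffunP => t; rewrite !ffunE nth_mkseq ?enc3_lt // !gvalM enc3_1 enc3_2 enc2_1 enc2_2.
by rewrite ?ffunE.
Qed.
Lemma one2E : one2 k = cv2 c_one2. Proof. by rewrite /one2 oneE tensE. Qed.
Lemma one3E : one3 k = cv3 c_one3. Proof. by rewrite /one3 oneE tens3E. Qed.

Lemma powHE u n : powH (cv1 u) n = cv1 (c_pow u n).
Proof. by elim: n => [|n IH]; rewrite /= ?oneE // -/(powH _ _) IH mulHE. Qed.
Lemma pow2E u n : pow2 (cv2 u) n = cv2 (c_pow2 u n).
Proof. by elim: n => [|n IH]; rewrite /= ?one2E // -/(pow2 _ _) IH mulH2E. Qed.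

Lemma cvec_valB (T : finType) (enc : T -> nat) u v :
  cvec_val enc u - cvec_val enc v = cvec_val enc (cv_add u (cv_scale gdyN1 v)).
Proof.
rewrite -cvec_valD -cvec_valZ gvalN1; congr (_ + _).
by apply/ffunP => t; rewrite !ffunE mulN1r.
Qed.
Lemma cvec_valN (T : finType) (enc : T -> nat) u : - cvec_val enc u = cvec_val enc (cv_scale gdyN1 u).
Proof. by apply/ffunP => t; rewrite !ffunE gval_nth_scale gvalN1 mulN1r. Qed.

Lemma pplusE : pplus k = cv1 c_pplus.
Proof. by rewrite /pplus oneE gE cvec_valD -gval_half cvec_valZ. Qed.
Lemma pminusE : pminus k = cv1 c_pminus.
Proof. by rewrite /pminus oneE gE cvec_valB -gval_half cvec_valZ. Qed.
Lemma PhiE : Phi k = cv3 c_PhiV.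
Proof. by rewrite c_PhiVE /Phi one3E pminusE tens3E -gval2 cvec_valZ cvec_valB. Qed.

Lemma DeltaBE n : (n < 8)%N -> DeltaB j (dec1 n) = cv2 (nth [::] c_DeltaTab n).
Proof.
move=> lt_n; rewrite c_DeltaTabE nth_mkseq // /DeltaB dec1_1 // dec1_2 /c_DeltaB.
rewrite /DeltaG /DeltaX gE xE oneE pplusE pminusE -gval_i (@cvec_valZ B) (@cvec_valD B).
by rewrite !mulHE !tensE !(@cvec_valD (B * B)%type) !pow2E mulH2E.
Qed.
Lemma DeltaE u : Delta j (cv1 u) = cv2 (c_Delta u).
Proof. by apply: sum_lin1 => n lt_n; rewrite DeltaBE. Qed.

Lemma SE u : S j (cv1 u) = cv1 (c_S u).
Proof.
apply: sum_lin1 => n lt_n; rewrite c_STabE nth_mkseq // /SB dec1_1 // dec1_2 /c_SB.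
by rewrite /SX xE pplusE pminusE gE -gval_i !cvec_valZ cvec_valD mulHE cvec_valN !powHE mulHE.
Qed.

Lemma cst_assoc p q r t : \sum_s cst k p q s * cst k s r t = \sum_s cst k q r s * cst k p s t.
Proof.
rewrite -(enc1K p) -(enc1K q) -(enc1K r) -(enc1K t).
have /allP/(_ (enc1 p)) := c_cst_assoc; rewrite mem_iota8 enc1_lt => /(_ isT).
move=> /allP /(_ (enc1 q)); rewrite mem_iota8 enc1_lt => /(_ isT).
move=> /allP /(_ (enc1 r)); rewrite mem_iota8 enc1_lt => /(_ isT).
move=> /allP /(_ (enc1 t)); rewrite mem_iota8 enc1_lt => /(_ isT).
move=> /gval_eqb; rewrite !gval_sum !(sum_enc enc1_lt enc1K dec1K) => E.
transitivity (\sum_(m <- iota 0 8) gval (gdy_mul (c_cst (enc1 p) (enc1 q) m) (c_cst m (enc1 r) (enc1 t)))).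
  by apply: eq_big_seq => m; rewrite mem_iota8 => lt_m; rewrite gvalM !cstE ?enc1_lt // dec1K // enc1K.
rewrite E; apply: eq_big_seq => m; rewrite mem_iota8 => lt_m.
by rewrite gvalM !cstE ?enc1_lt // dec1K // enc1K.
Qed.

Lemma cst_1l q t : cst k (ord0, ord0) q t = (q == t)%:R.
Proof.
rewrite -dec1_0 -(enc1K q) cstE ?enc1_lt // enc1K -(inj_eq (can_inj enc1K)).
have /allP/(_ (enc1 q)) := c_cst_unit; rewrite mem_iota8 enc1_lt => /(_ isT).
move=> /allP /(_ (enc1 t)); rewrite mem_iota8 enc1_lt => /(_ isT) /gval_eqb ->.
by case: (_ == _); rewrite ?gval1 ?gval0.
Qed.

Definition cst3 (p q t : B * B * B) : k :=
  cst k p.1.1 q.1.1 t.1.1 * cst k p.1.2 q.1.2 t.1.2 * cst k p.2 q.2 t.2.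

Lemma sum3_split (X Y Z : B -> k) :
  \sum_(s : B * B * B) X s.1.1 * Y s.1.2 * Z s.2 = (\sum_a X a) * (\sum_b Y b) * (\sum_c Z c).
Proof.
transitivity (\sum_(s1 : B * B) \sum_(c : B) X s1.1 * Y s1.2 * Z c); first by rewrite pair_bigA.
transitivity (\sum_(a : B) \sum_(b : B) \sum_(c : B) X a * Y b * Z c).
  by symmetry; rewrite pair_bigA.
rewrite -mulrA big_distrl /=; apply: eq_bigr => a _.
rewrite big_distrl /= big_distrr /=; apply: eq_bigr => b _.
by rewrite mulrA big_distrr /=; apply: eq_bigr => c _; ring.
Qed.

Lemma cst3_assoc p q r t : \sum_s cst3 p q s * cst3 s r t = \sum_s cst3 q r s * cst3 p s t.
Proof.
rewrite /cst3.
transitivity (\sum_(s : B * B * B) (cst k p.1.1 q.1.1 s.1.1 * cst k s.1.1 r.1.1 t.1.1) *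
   (cst k p.1.2 q.1.2 s.1.2 * cst k s.1.2 r.1.2 t.1.2) * (cst k p.2 q.2 s.2 * cst k s.2 r.2 t.2)).
  by apply: eq_bigr => s _; ring.
rewrite (sum3_split (fun a => cst k p.1.1 q.1.1 a * cst k a r.1.1 t.1.1)
  (fun b => cst k p.1.2 q.1.2 b * cst k b r.1.2 t.1.2) (fun c => cst k p.2 q.2 c * cst k c r.2 t.2)).
rewrite !cst_assoc -(sum3_split (fun a => cst k q.1.1 r.1.1 a * cst k p.1.1 a t.1.1)
  (fun b => cst k q.1.2 r.1.2 b * cst k p.1.2 b t.1.2) (fun c => cst k q.2 r.2 c * cst k p.2 c t.2)).
by apply: eq_bigr => s _; ring.
Qed.

Lemma mulH3A (u v w : H3 k) : mulH3 (mulH3 u v) w = mulH3 u (mulH3 v w).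
Proof. exact: (mulgA cst3_assoc). Qed.

Lemma mulH3_1l (v : H3 k) : mulH3 (one3 k) v = v.
Proof.
apply: (mulg_1l (e := ((ord0, ord0), (ord0, ord0), (ord0, ord0)))) => [[[a b] c]|[[a b] c] [[a' b'] c']].
  by rewrite /one3 /oneH !ffunE /= !xpair_eqE; do 3 case: (_ == _); rewrite ?mulr1 ?mulr0 ?mul0r.
by rewrite /cst3 /= !cst_1l !xpair_eqE; do 3 case: (_ == _); rewrite ?mulr1 ?mulr0 ?mul0r.
Qed.

Lemma S_add x y : S j (x + y) = S j x + S j y.
Proof.
rewrite /S -big_split; apply: eq_bigr => p _.
by apply/ffunP => t; rewrite !ffunE mulrDl.
Qed.
Lemma S_scl c x : S j (c *F x) = c *F S j x.
Proof.
apply/ffunP => t; rewrite !ffunE !sum_ffunE big_distrr.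
by apply: eq_bigr => p _; rewrite !ffunE -mulrA.
Qed.

(* S^{-1} and Phi^{-1} are determined by their defining properties: S^{-1}
   is given by the table c_SinvTab, and Phi is an involution. *)
Section QuasiHopfData.
Variable Sinv : H k -> H k.
Hypothesis SinvK : forall u, S j (Sinv u) = u /\ Sinv (S j u) = u.
Variable Phiinv : H3 k.
Hypothesis Phi_Phiinv : mulH3 (Phi k) Phiinv = one3 k.

Lemma Sinv_add x y : Sinv (x + y) = Sinv x + Sinv y.
Proof.
have [Sx _] := SinvK x; have [Sy _] := SinvK y.
by rewrite -{1}Sx -{1}Sy -S_add; case: (SinvK (Sinv x + Sinv y)).
Qed.
Lemma Sinv_scl c x : Sinv (c *F x) = c *F Sinv x.
Proof. by have [Sx _] := SinvK x; rewrite -{1}Sx -S_scl; case: (SinvK (c *F Sinv x)). Qed.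

Lemma SinvE u : Sinv (cv1 u) = cv1 (c_Sinv u).
Proof.
rewrite (lin_decomp Sinv_add Sinv_scl); apply: sum_lin1 => n lt_n.
have /allP/(_ n) := c_SinvTab_ok; rewrite mem_iota8 lt_n => /(_ isT) /(cvec_val_eqb enc1) Sn.
by rewrite ebE // -Sn -SE; case: (SinvK (cv1 (nth [::] c_SinvTab n))).
Qed.

Lemma Phiinv_eq_Phi : Phiinv = Phi k.
Proof.
have PhiPhi : mulH3 (Phi k) (Phi k) = one3 k.
  by rewrite PhiE mulH3E one3E; apply: cvec_val_eqb c_Phi_invol.
have Phi1 : mulH3 (Phi k) (one3 k) = Phi k.
  by rewrite PhiE one3E mulH3E; apply: cvec_val_eqb c_Phi_mul1.
by rewrite -(mulH3_1l Phiinv) -PhiPhi mulH3A Phi_Phiinv Phi1.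
Qed.

Lemma SSopE T : SSop j (cv2 T) = cv2 (c_SSop T).
Proof. by apply: sum_lin2 => n lt_n; rewrite !ebE ?SE ?tensE //; lia. Qed.

Ltac to_model := repeat (first [rewrite mulHE | rewrite SE | rewrite tensE | rewrite DeltaE
  | rewrite mulH2E | rewrite gE | rewrite oneE | rewrite SinvE | rewrite SSopE]).

Lemma gamma_model : gammaE j Phiinv = cv2 c_gammaV.
Proof.
rewrite c_gammaVE /gammaE Phiinv_eq_Phi PhiE /alphaH.
under eq_bigr => p _ do under eq_bigr => q _ do rewrite sclA.
under eq_bigr => p _ do rewrite -scl_sum.
apply: sum_lin3 => n lt_n; apply: sum_lin3 => m lt_m.
by rewrite !ebE; try lia; to_model.
Qed.

Lemma delta_model : deltaE j Phiinv = cv2 c_deltaV.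
Proof.
rewrite c_deltaVE /deltaE Phiinv_eq_Phi PhiE /betaH.
under eq_bigr => p _ do under eq_bigr => q _ do rewrite sclA.
under eq_bigr => p _ do rewrite -scl_sum.
apply: sum_lin3 => n lt_n; apply: sum_lin3 => m lt_m.
by rewrite !ebE; try lia; to_model.
Qed.

Lemma f_model : fE j Phiinv = cv2 c_fV.
Proof.
rewrite c_fVE /fE gamma_model Phiinv_eq_Phi PhiE /betaH.
by apply: sum_lin3 => m lt_m; rewrite !ebE; try lia; to_model.
Qed.

Lemma finv_model : finvE j Phiinv = cv2 c_finvV.
Proof.
rewrite c_finvVE /finvE delta_model Phiinv_eq_Phi PhiE /alphaH.
by apply: sum_lin3 => m lt_m; rewrite !ebE; try lia; to_model.
Qed.

Lemma pR_model : pR j Phiinv = cv2 c_pRV.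
Proof.
rewrite c_pRVE /pR Phiinv_eq_Phi PhiE /betaH.
by apply: sum_lin3 => m lt_m; rewrite !ebE; try lia; to_model.
Qed.

Lemma qR_model : qR Sinv = cv2 c_qRV.
Proof.
rewrite c_qRVE /qR PhiE /alphaH.
by apply: sum_lin3 => m lt_m; rewrite !ebE; try lia; to_model.
Qed.

Lemma U_eq : UE j Sinv Phiinv = tens (gH k) (oneH k).
Proof.
rewrite gE oneE tensE -(cvec_val_eqb enc2 c_U_ok) /UE finv_model qR_model.
under eq_bigr => p _ do under eq_bigr => q _ do rewrite sclA.
under eq_bigr => p _ do rewrite -scl_sum.
apply: sum_lin2 => n lt_n; apply: sum_lin2 => m lt_m.
by rewrite !ebE; try lia; to_model.
Qed.

Lemma V_eq : VE j Sinv Phiinv = one2 k.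
Proof.
rewrite one2E -(cvec_val_eqb enc2 c_V_ok) /VE f_model pR_model.
under eq_bigr => p _ do under eq_bigr => q _ do rewrite sclA.
under eq_bigr => p _ do rewrite -scl_sum.
apply: sum_lin2 => n lt_n; apply: sum_lin2 => m lt_m.
by rewrite !ebE; try lia; to_model.
Qed.

Section Cointegral.
Variable lam : {ffun B -> k}.

Definition coint_lhs (h : H k) : H k :=
  \sum_a \sum_c \sum_d
     (VE j Sinv Phiinv a * UE j Sinv Phiinv c * Delta j h d *
        evalf lam (mulH (mulH (eb k a.2) (eb k d.2)) (eb k c.2))) *F
     mulH (mulH (eb k a.1) (eb k d.1)) (eb k c.1).
Definition coint_rhs (h : H k) : H k :=
  \sum_q (Phiinv q * muH (eb k q.1.1) * evalf lam (mulH h (S j (eb k q.1.2)))) *F eb k q.2.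

Lemma Delta_add (x y : H k) : Delta j (x + y) = Delta j x + Delta j y.
Proof.
rewrite /Delta -big_split; apply: eq_bigr => p _.
by apply/ffunP => t; rewrite !ffunE mulrDl.
Qed.
Lemma Delta_scl c (x : H k) : Delta j (c *F x) = c *F Delta j x.
Proof.
apply/ffunP => t; rewrite !ffunE !sum_ffunE big_distrr.
by apply: eq_bigr => p _; rewrite !ffunE -mulrA.
Qed.
Lemma mulH_addl (x y w : H k) : mulH (x + y) w = mulH x w + mulH y w.
Proof.
apply/ffunP => t; rewrite !ffunE -big_split /=; apply: eq_bigr => p _.
by rewrite -big_split /=; apply: eq_bigr => q _; rewrite !ffunE /=; ring.
Qed.
Lemma mulH_scll c (x w : H k) : mulH (c *F x) w = c *F mulH x w.
Proof.
apply/ffunP => t; rewrite !ffunE big_distrr /=; apply: eq_bigr => p _.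
by rewrite big_distrr /=; apply: eq_bigr => q _; rewrite !ffunE /=; ring.
Qed.
Lemma evalf_add (x y : H k) : evalf lam (x + y) = evalf lam x + evalf lam y.
Proof. by rewrite /evalf -big_split; apply: eq_bigr => p _; rewrite ffunE mulrDr. Qed.
Lemma evalf_scl c (x : H k) : evalf lam (c *F x) = c * evalf lam x.
Proof. by rewrite /evalf big_distrr /=; apply: eq_bigr => p _; rewrite ffunE /=; ring. Qed.

Lemma coint_lhs_add (x y : H k) : coint_lhs (x + y) = coint_lhs x + coint_lhs y.
Proof.
rewrite /coint_lhs -big_split; apply: eq_bigr => a _; rewrite -big_split; apply: eq_bigr => c _.
rewrite -big_split; apply: eq_bigr => d _.
have E : (Delta j x + Delta j y) d = Delta j x d + Delta j y d by rewrite ffunE.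
by rewrite Delta_add E mulrDr mulrDl scl_addl.
Qed.
Lemma coint_lhs_scl c (x : H k) : coint_lhs (c *F x) = c *F coint_lhs x.
Proof.
rewrite /coint_lhs scl_sum; apply: eq_bigr => a _; rewrite scl_sum; apply: eq_bigr => b _.
rewrite scl_sum; apply: eq_bigr => d _.
have E : (c *F Delta j x) d = c * Delta j x d by rewrite ffunE.
by rewrite Delta_scl E -sclA; congr (_ *F _); ring.
Qed.
Lemma coint_rhs_add (x y : H k) : coint_rhs (x + y) = coint_rhs x + coint_rhs y.
Proof.
rewrite /coint_rhs -big_split; apply: eq_bigr => q _.
by rewrite mulH_addl evalf_add mulrDr scl_addl.
Qed.
Lemma coint_rhs_scl c (x : H k) : coint_rhs (c *F x) = c *F coint_rhs x.
Proof.
rewrite /coint_rhs scl_sum; apply: eq_bigr => q _.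
by rewrite mulH_scll evalf_scl -sclA; congr (_ *F _); ring.
Qed.

Definition lam2 (X : H2 k) : H k := [ffun t => \sum_r lam r * X (t, r)].

Lemma lam2_add (X Y : H2 k) : lam2 (X + Y) = lam2 X + lam2 Y.
Proof.
apply/ffunP => t; rewrite !ffunE -big_split; apply: eq_bigr => r _; by rewrite ffunE mulrDr.
Qed.
Lemma lam2_scl c (X : H2 k) : lam2 (c *F X) = c *F lam2 X.
Proof.
apply/ffunP => t; rewrite !ffunE big_distrr /=; apply: eq_bigr => r _; rewrite ffunE /=; ring.
Qed.

Lemma evalf_tens w o : evalf lam (cv1 w) *F cv1 o = lam2 (cv2 (c_tens o w)).
Proof.
rewrite -tensE; apply/ffunP => t; rewrite !ffunE /evalf big_distrl /=.
by apply: eq_bigr => r _; rewrite !ffunE /=; ring.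
Qed.

Lemma sum_lam2 (T : finType) N (enc : T -> nat) dec :
  (forall t, (enc t < N)%N) -> (forall t, dec (enc t) = t) ->
  (forall n, (n < N)%N -> enc (dec n) = n) ->
  forall c X Xc, (forall n, (n < N)%N -> X (dec n) = lam2 (cv2 (Xc n))) ->
  \sum_p cvec_val enc c p *F X p = lam2 (cv2 (cv_lin (iota 0 N) (nth gdy0 c) Xc)).
Proof. by move=> enc_lt encK decK; apply: (sum_cvec_val_map enc_lt encK decK lam2_add lam2_scl). Qed.

Lemma muHE u : muH (cv1 u) = gval (c_mu u).
Proof.
rewrite /muH /c_mu gval_sum (sum_enc enc1_lt enc1K dec1K); apply: eq_big_seq => n.
rewrite mem_iota8 => lt_n; rewrite (cvec_val_dec dec1K) // gvalM dec1_1 // dec1_2.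
by case: ifP => _; rewrite ?gval_sign ?gval0.
Qed.

Lemma coint_lhs_basis n : (n < 8)%N -> coint_lhs (eb k (dec1 n)) = lam2 (cv2 (c_lhs n)).
Proof.
move=> lt_n; rewrite /coint_lhs V_eq U_eq gE oneE tensE one2E ebE // DeltaE.
under eq_bigr => a _ do under eq_bigr => c _ do under eq_bigr => d _ do rewrite !sclA.
under eq_bigr => a _ do under eq_bigr => c _ do rewrite -scl_sum.
under eq_bigr => a _ do rewrite -scl_sum.
under eq_bigr => a _ do under eq_bigr => c _ do rewrite -scl_sum.
apply: (sum_lam2 enc2_lt enc2K dec2K) => a lt_a.
apply: (sum_lam2 enc2_lt enc2K dec2K) => c lt_c.
apply: (sum_lam2 enc2_lt enc2K dec2K) => d lt_d.
by rewrite !ebE; try lia; to_model; rewrite evalf_tens.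
Qed.

Lemma coint_rhs_basis n : (n < 8)%N -> coint_rhs (eb k (dec1 n)) = lam2 (cv2 (c_rhs n)).
Proof.
move=> lt_n; rewrite /coint_rhs Phiinv_eq_Phi PhiE.
under eq_bigr => q _ do rewrite !sclA.
apply: (sum_lam2 enc3_lt enc3K dec3K) => m lt_m.
by rewrite !ebE; try lia; to_model; rewrite muHE evalf_tens -lam2_scl cvec_valZ.
Qed.

Lemma coint_basis_iff n : (n < 8)%N ->
  coint_lhs (eb k (dec1 n)) = coint_rhs (eb k (dec1 n)) <->
  lam2 (cv2 (nth [::] c_cointTab n)) = 0.
Proof.
move=> lt_n; rewrite coint_lhs_basis // coint_rhs_basis // c_cointTabE nth_mkseq // /c_coint.
rewrite -cvec_valD -cvec_valZ gvalN1 lam2_add lam2_scl scl_N1.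
by split=> [->|/eqP]; [rewrite subrr | rewrite subr_eq0 => /eqP].
Qed.

Definition eqn_val (row : cvec) : k := \sum_r lam r * gval (nth gdy0 row (enc1 r)).

Lemma lam2_eqn m t : (t < 8)%N -> lam2 (cv2 m) (dec1 t) =
  eqn_val (mkseq (fun r => nth gdy0 m (8 * t + r)) 8).
Proof.
move=> lt_t; rewrite ffunE /eqn_val; apply: eq_bigr => r _.
by rewrite ffunE nth_mkseq ?enc1_lt // /enc2 /= dec1K.
Qed.
Lemma eqn_val_add a b : eqn_val (cv_add a b) = eqn_val a + eqn_val b.
Proof. by rewrite /eqn_val -big_split; apply: eq_bigr => r _; rewrite gval_nth_add mulrDr. Qed.
Lemma eqn_val_scale c a : eqn_val (cv_scale c a) = gval c * eqn_val a.
Proof. by rewrite /eqn_val big_distrr; apply: eq_bigr => r _; rewrite gval_nth_scale /=; ring. Qed.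

Lemma eqn_val_isolates row r0 : (r0 < 8)%N -> isolates row r0 ->
  eqn_val row = lam (dec1 r0) * gval (nth gdy0 row r0).
Proof.
move=> lt_r0 /andP[/allP only_r0 _].
rewrite /eqn_val (sum_enc enc1_lt enc1K dec1K) (bigD1_seq r0) ?mem_iota8 ?iota_uniq //= dec1K //.
rewrite big_seq_cond big1 ?addr0 // => n /andP[n_in ne_n].
have := only_r0 n n_in; rewrite (negbTE ne_n) /= => /gval_is0 row_n.
by rewrite dec1K -?mem_iota8 // row_n mulr0.
Qed.

Lemma x3idxE : x3idx = dec1 3.
Proof. by rewrite /x3idx /dec1; congr pair; apply: val_inj; rewrite /= inordK. Qed.

Lemma cointegral_vanishes : is_left_cointegral j Sinv Phiinv lam ->
  forall t, t != x3idx -> lam t = 0.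
Proof.
move=> coint.
have eqn0 n t : (n < 8)%N -> (t < 8)%N -> eqn_val (c_eqn n t) = 0.
  move=> lt_n lt_t; rewrite /c_eqn -lam2_eqn //.
  by have /(coint_basis_iff lt_n) -> := coint (eb k (dec1 n)); rewrite ffunE.
have lam0 r0 : r0 \in [:: 0; 1; 2; 4; 5; 6; 7]%N -> lam (dec1 r0) = 0.
  move=> r0_in; have iso := allP c_elim_ok r0 r0_in; have /andP[_ unit] := iso.
  have lt_r0 : (r0 < 8)%N := allP (isT : all (fun r => r < 8)%N [:: 0; 1; 2; 4; 5; 6; 7]%N) r0 r0_in.
  have : eqn_val (c_elim r0) = 0.
    move: r0_in; rewrite !inE => /or4P[| | |/or4P[| | |]] /eqP-> ; cbn [c_elim];
    by rewrite ?eqn_val_add ?eqn_val_scale ?eqn0 ?mulr0 ?addr0.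
  rewrite (eqn_val_isolates lt_r0 iso) => /eqP.
  by rewrite mulf_eq0 (negbTE (gval_unit unit)) orbF => /eqP.
move=> t ne_t; rewrite -(enc1K t); apply: lam0.
have : enc1 t != 3%N by apply: contra ne_t => /eqP E; rewrite -(enc1K t) E -x3idxE.
by have := enc1_lt t; case: (enc1 t) => [|[|[|[|[|[|[|[|m]]]]]]]].
Qed.

(* Every multiple of P_{x^3} is a left cointegral: no equation involves
   lambda(x^3). *)
Lemma Px3_cointegral c : lam = c *F Pdual k x3idx -> is_left_cointegral j Sinv Phiinv lam.
Proof.
move=> lamE h; rewrite -/(coint_lhs h) -/(coint_rhs h).
rewrite (lin_decomp coint_lhs_add coint_lhs_scl h) (lin_decomp coint_rhs_add coint_rhs_scl h).
apply: eq_bigr => p _; congr (_ *F _); rewrite -(enc1K p) coint_basis_iff ?enc1_lt //.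
apply/ffunP => t; rewrite -(enc1K t) lam2_eqn ?enc1_lt // ffunE.
rewrite /eqn_val lamE (bigD1 x3idx) //= big1 => [|r ne_r]; last first.
  by rewrite !ffunE (negbTE ne_r) mulr0 mul0r.
rewrite !ffunE eqxx mulr1 addr0 x3idxE dec1K //.
have /allP/(_ (enc1 p)) := c_eqn_col3; rewrite mem_iota8 enc1_lt => /(_ isT).
move=> /allP/(_ (enc1 t)); rewrite mem_iota8 enc1_lt => /(_ isT) /gval_is0.
by rewrite /c_eqn nth_mkseq // => ->; rewrite mulr0.
Qed.
End Cointegral.
End QuasiHopfData.
End Interpretation.

Lemma prim4_sqr (F : fieldType) (i : F) : 4.-primitive_root i -> i * i = -1.
Proof.
move=> i_prim; have i2_ne1 : i ^+ 2 != 1 by rewrite -(prim_order_dvd i_prim).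
have : (i ^+ 2 - 1) * (i ^+ 2 + 1) = 0.
  by rewrite -subr_sqr expr1n -exprM (prim_expr_order i_prim) subrr.
by move/eqP; rewrite mulf_eq0 subr_eq0 (negbTE i2_ne1) addr_eq0 -expr2 => /eqP.
Qed.

Lemma prim4_two_nz (F : fieldType) (i : F) : 4.-primitive_root i -> (2 : F) != 0.
Proof.
move=> i_prim; apply/eqP => two0.
have : i ^+ 2 == 1.
  by rewrite expr2 (prim4_sqr i_prim) -subr_eq0 -opprD oppr_eq0 -mulr2n two0.
by rewrite -(prim_order_dvd i_prim).
Qed.

Lemma sign_sqr (F : fieldType) (s : bool) (x : F) :
  x * x = -1 -> ((-1) ^+ s * x) * ((-1) ^+ s * x) = -1.
Proof. by case: s; rewrite ?expr0 ?mul1r // expr1 mulN1r mulrNN. Qed.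

Theorem mainTheorem16 (k : fieldType) (i : k) (s : bool)
    (Sinv : H k -> H k) (Phiinv : H3 k) :
  4.-primitive_root i ->
  (forall u, S ((-1) ^+ s * i) (Sinv u) = u /\ Sinv (S ((-1) ^+ s * i) u) = u) ->
  mulH3 (Phi k) Phiinv = one3 k /\ mulH3 Phiinv (Phi k) = one3 k ->
  forall lam : {ffun B -> k},
    is_left_cointegral ((-1) ^+ s * i) Sinv Phiinv lam <->
    exists c : k, lam = c *F Pdual k x3idx.
Proof.
move=> i_prim SinvK [Phi_Phiinv _] lam.
have j_sqr := sign_sqr s (prim4_sqr i_prim).
have two_nz := prim4_two_nz i_prim.
split=> [coint|[c lamE]]; last exact: (Px3_cointegral j_sqr two_nz SinvK Phi_Phiinv lamE).
exists (lam x3idx); apply/ffunP => t; rewrite !ffunE.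
have [->|ne_t] := eqVneq t x3idx; first by rewrite mulr1.
by rewrite mulr0 (cointegral_vanishes j_sqr two_nz SinvK Phi_Phiinv coint).
Qed.
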